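(* For every integer $n\ge 0$, the nanostar dendrimer $D_3[n]$ satisfies $$SO(D_3[n])=(63\cdot 2^n-30)\sqrt{2}+(18\cdot 2^n-12)\sqrt{13}.$$
   Context: For a finite simple graph $G$, $SO(G)=\sum_{uv\in E(G)}\sqrt{d_u^2+d_v^2}$, where $d_u$ is the degree of $u$ in $G$ (the Sombor index). Define rooted graphs $B_m$ recursively: $B_0$ is a hexagon $C_6$ with a distinguished root vertex; for $m\ge 1$, $B_m$ is obtained from a hexagon with vertices $a_1,\ldots,a_6$ in cyclic order, a new vertex $b$ joined by an edge to $a_4$, and two disjoint copies of $B_{m-1}$ whose roots are each joined by an edge to $b$; the root of $B_m$ is $a_1$. The dendrimer $D_3[n]$ is obtained from three disjoint copies of $B_n$ and a new central vertex $c$ joined by an edge to the root of each copy. *)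

From Stdlib Require Import Reals List Arith.
Import ListNotations.
Open Scope R_scope.

(* A finite (rooted) graph with vertex set {0, ..., nv-1}, given by its list of
   edges (each unordered edge listed exactly once), and a root vertex. *)
Record rgraph := RGraph { nv : nat; edges : list (nat * nat); root : nat }.

Definition shift_edge (k : nat) (e : nat * nat) : nat * nat :=
  ((k + fst e)%nat, (k + snd e)%nat).

(* degree of v = number of edges incident to v (graphs are loopless) *)
Definition deg (E : list (nat * nat)) (v : nat) : nat :=
  length (filter (fun e => orb (Nat.eqb (fst e) v) (Nat.eqb (snd e) v)) E).

Definition SO (G : rgraph) : R :=
  fold_right Rplus 0
    (map (fun e => sqrt (INR (deg (edges G) (fst e)) ^ 2
                         + INR (deg (edges G) (snd e)) ^ 2)) (edges G)).

Definition hexagon_edges : list (nat * nat) :=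
  [(0,1); (1,2); (2,3); (3,4); (4,5); (5,0)]%nat.

(* B_0 : hexagon rooted at 0.
   B_(m+1): hexagon a1..a6 = 0..5, b = 6, edge a4 b = (3,6), two disjoint copies
   of B_m on labels 7.. and 7+|B_m|.., their roots joined to b; root a1 = 0. *)
Fixpoint B (m : nat) : rgraph :=
  match m with
  | O => RGraph 6 hexagon_edges 0
  | S m' =>
      let G := B m' in
      let s1 := 7%nat in
      let s2 := (7 + nv G)%nat in
      RGraph (7 + 2 * nv G)%nat
        (hexagon_edges ++ [(3,6)%nat; (6, s1 + root G)%nat; (6, s2 + root G)%nat]
          ++ map (shift_edge s1) (edges G) ++ map (shift_edge s2) (edges G))
        0
  end.

Definition D3 (n : nat) : rgraph :=
  let G := B n in
  let N := nv G in
  RGraph (3 * N + 1)%nat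
    ([(3 * N, root G); (3 * N, N + root G); (3 * N, 2 * N + root G)]%nat
      ++ edges G ++ map (shift_edge N) (edges G) ++ map (shift_edge (2 * N)) (edges G))
    (3 * N)%nat.

(* Every vertex of a copy of B_m inside B_(m+1) or D_3[n] has its degree in B_m,
   except the root, which gains exactly one edge.  So the Sombor sum over the
   edges of such a copy depends only on m; call it S_m.  Reading off the seven
   new vertices of B_(m+1) gives S_(m+1) = 4 sqrt 13 + 13 sqrt 2 + 2 S_m with
   S_0 = 2 sqrt 13 + 8 sqrt 2, and SO(D_3[n]) = 9 sqrt 2 + 3 S_n. *)

From Stdlib Require Import Reals List Arith Lia Lra.
Import ListNotations.
Open Scope R_scope.

Definition sombor_term (a b : nat) : R := sqrt (INR a ^ 2 + INR b ^ 2).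

Definition sombor_sum (d : nat -> nat) (E : list (nat * nat)) : R :=
  fold_right Rplus 0 (map (fun e => sombor_term (d (fst e)) (d (snd e))) E).

Definition edges_below (N : nat) (E : list (nat * nat)) : Prop :=
  forall e, In e E -> (fst e < N /\ snd e < N)%nat.

Lemma SO_sombor_sum G : SO G = sombor_sum (deg (edges G)) (edges G).
Proof. reflexivity. Qed.

Lemma sombor_term_sym a b : sombor_term a b = sombor_term b a.
Proof. unfold sombor_term; f_equal; ring. Qed.

Lemma sombor_term_3_2 : sombor_term 3 2 = sqrt 13.
Proof. unfold sombor_term; f_equal; simpl; ring. Qed.

Lemma sombor_term_diag a : sombor_term a a = INR a * sqrt 2.
Proof.
  pose proof (pos_INR a).
  unfold sombor_term; replace (INR a ^ 2 + INR a ^ 2) with (INR a * INR a * 2) by ring.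
  rewrite sqrt_mult, sqrt_square; nra.
Qed.

Lemma sombor_sum_app d E1 E2 :
  sombor_sum d (E1 ++ E2) = sombor_sum d E1 + sombor_sum d E2.
Proof.
  unfold sombor_sum; induction E1 as [|e E1 IH]; cbn [app map fold_right]; [ring|].
  rewrite IH; ring.
Qed.

Lemma sombor_sum_ext N d1 d2 E : edges_below N E ->
  (forall v, (v < N)%nat -> d1 v = d2 v) -> sombor_sum d1 E = sombor_sum d2 E.
Proof.
  intros HE Hd; induction E as [|e E IH]; [reflexivity|].
  destruct (HE e (or_introl eq_refl)) as [Hx Hy].
  unfold sombor_sum in *; cbn [map fold_right].
  rewrite Hd, (Hd (snd e)), IH by (auto; intros f Hf; apply HE; now right).
  reflexivity.
Qed.

Lemma sombor_sum_shift N k d1 d2 E : edges_below N E ->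
  (forall v, (v < N)%nat -> d1 (k + v)%nat = d2 v) ->
  sombor_sum d1 (map (shift_edge k) E) = sombor_sum d2 E.
Proof.
  intros HE Hd; rewrite <- (sombor_sum_ext N (fun v => d1 (k + v)%nat) d2 E) by auto.
  unfold sombor_sum; now rewrite map_map.
Qed.

Lemma deg_app E1 E2 v : deg (E1 ++ E2) v = (deg E1 v + deg E2 v)%nat.
Proof. unfold deg; now rewrite filter_app, length_app. Qed.

Lemma deg_shift k E v : deg (map (shift_edge k) E) (k + v) = deg E v.
Proof.
  unfold deg; induction E as [|[x y] E IH]; [reflexivity|]; cbn [map filter fst snd shift_edge].
  destruct (Nat.eqb_spec (k + x) (k + v)), (Nat.eqb_spec x v),
           (Nat.eqb_spec (k + y) (k + v)), (Nat.eqb_spec y v);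
    cbn [orb length]; try lia; now rewrite IH.
Qed.

Lemma deg_shift_outside N k E v : edges_below N E -> (v < k \/ k + N <= v)%nat ->
  deg (map (shift_edge k) E) v = 0%nat.
Proof.
  intros HE Hv; unfold deg; induction E as [|e E IH]; [reflexivity|].
  destruct (HE e (or_introl eq_refl)).
  cbn [map filter fst snd shift_edge].
  destruct (Nat.eqb_spec (k + fst e) v), (Nat.eqb_spec (k + snd e) v); try lia.
  apply IH; intros f Hf; apply HE; now right.
Qed.

Lemma deg_above N E v : edges_below N E -> (N <= v)%nat -> deg E v = 0%nat.
Proof.
  intros HE Hv; rewrite <- (map_id E), <- (deg_shift_outside N 0 E v) by (auto; lia).
  f_equal; apply map_ext; now intros [].
Qed.

Ltac deg_eval :=
  cbv [deg filter length fst snd orb hexagon_edges];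
  repeat match goal with
         | |- context [Nat.eqb ?a ?b] => destruct (Nat.eqb_spec a b); try (exfalso; lia)
         end;
  cbn [orb length]; try lia.

Lemma root_B m : root (B m) = 0%nat.
Proof. now destruct m. Qed.

Lemma nv_B_ge6 m : (6 <= nv (B m))%nat.
Proof. destruct m; cbn; lia. Qed.

Lemma edges_B_below m : edges_below (nv (B m)) (edges (B m)).
Proof.
  induction m as [|m IH]; intros e He.
  - cbn in He; repeat (destruct He as [<- | He]; [cbn; lia|]); contradiction.
  - pose proof (nv_B_ge6 m).
    cbn [B edges nv] in *; rewrite root_B in He.
    rewrite !in_app_iff in He.
    destruct He as [He | [He | [He | He]]];
      try (cbn in He; repeat (destruct He as [<- | He]; [cbn; lia|]); contradiction);
      apply in_map_iff in He as [f [<- Hf]]; destruct (IH f Hf); cbn; lia.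
Qed.

Lemma deg_B_root m : deg (edges (B m)) 0 = 2%nat.
Proof.
  destruct m as [|m]; [reflexivity|].
  pose proof (nv_B_ge6 m); pose proof (edges_B_below m).
  cbn [B edges]; rewrite root_B, !deg_app.
  rewrite (deg_shift_outside (nv (B m)) 7), (deg_shift_outside (nv (B m)) (7 + nv (B m)))
    by (auto; lia).
  deg_eval.
Qed.

(* Degrees in a copy of B_m whose root has one extra neighbour, as in B_(m+1) and D_3[n]. *)
Definition deg_attached (m v : nat) : nat :=
  (deg (edges (B m)) v + if Nat.eqb v 0 then 1 else 0)%nat.

Lemma deg_attached_root m : deg_attached m 0 = 3%nat.
Proof. unfold deg_attached; now rewrite deg_B_root. Qed.

Lemma deg_attached_hexagon_hub m v : (v <= 6)%nat ->
  deg_attached (S m) v = match v with 0 | 3 | 6 => 3 | _ => 2 end%nat.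
Proof.
  intros Hv; pose proof (nv_B_ge6 m); pose proof (edges_B_below m).
  unfold deg_attached; cbn [B edges]; rewrite root_B, !deg_app.
  rewrite (deg_shift_outside (nv (B m)) 7), (deg_shift_outside (nv (B m)) (7 + nv (B m)))
    by (auto; lia).
  do 7 (destruct v as [|v]; [deg_eval|]); lia.
Qed.

Lemma deg_attached_left m v : (v < nv (B m))%nat ->
  deg_attached (S m) (7 + v) = deg_attached m v.
Proof.
  intros Hv; pose proof (nv_B_ge6 m); pose proof (edges_B_below m).
  unfold deg_attached; cbn [B edges]; rewrite root_B, !deg_app, deg_shift.
  rewrite (deg_shift_outside (nv (B m)) (7 + nv (B m))) by (auto; lia).
  destruct (Nat.eqb_spec v 0) as [-> | ]; [rewrite deg_B_root | generalize (deg (edges (B m)) v)];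
    deg_eval.
Qed.

Lemma deg_attached_right m v : (v < nv (B m))%nat ->
  deg_attached (S m) (7 + nv (B m) + v) = deg_attached m v.
Proof.
  intros Hv; pose proof (nv_B_ge6 m); pose proof (edges_B_below m).
  unfold deg_attached; cbn [B edges]; rewrite root_B, !deg_app, deg_shift.
  rewrite (deg_shift_outside (nv (B m)) 7) by (auto; lia).
  destruct (Nat.eqb_spec v 0) as [-> | ]; [rewrite deg_B_root | generalize (deg (edges (B m)) v)];
    deg_eval.
Qed.

Definition SO_attached (m : nat) : R := sombor_sum (deg_attached m) (edges (B m)).

Lemma SO_attached_0 : SO_attached 0 = 2 * sqrt 13 + 8 * sqrt 2.
Proof.
  unfold SO_attached, sombor_sum; cbn [B edges hexagon_edges map fold_right fst snd].
  cbv [deg_attached deg B edges hexagon_edges filter length fst snd orb Nat.eqb Nat.add].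
  rewrite (sombor_term_sym 2 3), sombor_term_3_2, !sombor_term_diag; simpl; ring.
Qed.

Lemma SO_attached_S m : SO_attached (S m) = 4 * sqrt 13 + 13 * sqrt 2 + 2 * SO_attached m.
Proof.
  pose proof (nv_B_ge6 m); pose proof (edges_B_below m).
  unfold SO_attached at 1; cbn [B edges]; rewrite root_B, !sombor_sum_app.
  rewrite (sombor_sum_shift (nv (B m)) 7 _ (deg_attached m)),
          (sombor_sum_shift (nv (B m)) (7 + nv (B m)) _ (deg_attached m))
    by (auto; intros; auto using deg_attached_left, deg_attached_right).
  unfold sombor_sum at 1 2; cbn [hexagon_edges map fold_right fst snd].
  rewrite !deg_attached_hexagon_hub, deg_attached_left, deg_attached_right, !deg_attached_root
    by lia.
  rewrite (sombor_term_sym 2 3), sombor_term_3_2, !sombor_term_diag.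
  unfold SO_attached; simpl; ring.
Qed.

Lemma SO_attached_closed m :
  SO_attached m = (21 * 2 ^ m - 13) * sqrt 2 + (6 * 2 ^ m - 4) * sqrt 13.
Proof.
  induction m as [|m IH].
  - rewrite SO_attached_0; simpl; ring.
  - rewrite SO_attached_S, IH; simpl; ring.
Qed.

Section D3_degrees.

Variable n : nat.

Lemma deg_D3_center : deg (edges (D3 n)) (3 * nv (B n)) = 3%nat.
Proof.
  pose proof (nv_B_ge6 n); pose proof (edges_B_below n).
  unfold D3; cbn [edges]; rewrite root_B, !deg_app.
  rewrite (deg_above (nv (B n)) (edges (B n))), (deg_shift_outside (nv (B n)) (nv (B n))),
          (deg_shift_outside (nv (B n)) (2 * nv (B n))) by (auto; lia).
  deg_eval.
Qed.

Lemma deg_D3_copy0 v : (v < nv (B n))%nat -> deg (edges (D3 n)) v = deg_attached n v.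
Proof.
  intros Hv; pose proof (nv_B_ge6 n); pose proof (edges_B_below n).
  unfold D3, deg_attached; cbn [edges]; rewrite root_B, !deg_app.
  rewrite (deg_shift_outside (nv (B n)) (nv (B n))),
          (deg_shift_outside (nv (B n)) (2 * nv (B n))) by (auto; lia).
  generalize (deg (edges (B n)) v); deg_eval.
Qed.

Lemma deg_D3_copy1 v : (v < nv (B n))%nat ->
  deg (edges (D3 n)) (nv (B n) + v) = deg_attached n v.
Proof.
  intros Hv; pose proof (nv_B_ge6 n); pose proof (edges_B_below n).
  unfold D3, deg_attached; cbn [edges]; rewrite root_B, !deg_app, deg_shift.
  rewrite (deg_above (nv (B n)) (edges (B n))), (deg_shift_outside (nv (B n)) (2 * nv (B n)))
    by (auto; lia).
  generalize (deg (edges (B n)) v); deg_eval.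
Qed.

Lemma deg_D3_copy2 v : (v < nv (B n))%nat ->
  deg (edges (D3 n)) (2 * nv (B n) + v) = deg_attached n v.
Proof.
  intros Hv; pose proof (nv_B_ge6 n); pose proof (edges_B_below n).
  unfold D3, deg_attached; cbn [edges]; rewrite root_B, !deg_app, deg_shift.
  rewrite (deg_above (nv (B n)) (edges (B n))), (deg_shift_outside (nv (B n)) (nv (B n)))
    by (auto; lia).
  generalize (deg (edges (B n)) v); deg_eval.
Qed.

End D3_degrees.

Lemma SO_D3_decomp n : SO (D3 n) = 9 * sqrt 2 + 3 * SO_attached n.
Proof.
  pose proof (nv_B_ge6 n); pose proof (edges_B_below n).
  rewrite SO_sombor_sum; set (d := deg (edges (D3 n))).
  unfold D3; cbn [edges]; rewrite root_B, !sombor_sum_app.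
  rewrite (sombor_sum_ext (nv (B n)) d (deg_attached n) (edges (B n))),
          (sombor_sum_shift (nv (B n)) (nv (B n)) d (deg_attached n)),
          (sombor_sum_shift (nv (B n)) (2 * nv (B n)) d (deg_attached n))
    by (auto; apply deg_D3_copy0 || apply deg_D3_copy1 || apply deg_D3_copy2).
  unfold sombor_sum at 1; cbn [map fold_right fst snd]; unfold d.
  rewrite deg_D3_center, deg_D3_copy0, deg_D3_copy1, deg_D3_copy2, deg_attached_root by lia.
  rewrite sombor_term_diag; unfold SO_attached; simpl; ring.
Qed.

Theorem mainTheorem12 (n : nat) :
  SO (D3 n) = (63 * 2 ^ n - 30) * sqrt 2 + (18 * 2 ^ n - 12) * sqrt 13.
Proof.
  rewrite SO_D3_decomp, SO_attached_closed; ring.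
Qed.
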